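(* Let $r\in\mathbb{N}$, let $\mathbf{e}=(e_1,\ldots,e_r)\in\mathbb{Z}^r$, and suppose the Jordan totient quotient $J_{\mathbf e}$ has weight $w=\sum_{i=1}^r ie_i=0$. Then $\mathfrak{S}_{\mathbf e}>0$ and, for $x\ge 2$, \[ \sum_{n\le x}J_{\mathbf e}(n)=\mathfrak{S}_{\mathbf e}\,x+O_{\mathbf e}\big((\log x)^{|e_1|}\big). \]
   Context: Throughout, $p$ denotes a prime. For an integer $k\ge1$, the $k$-th Jordan totient is $J_k(n)=n^k\prod_{p\mid n}(1-p^{-k})$. For $\mathbf e=(e_1,\ldots,e_r)\in\mathbb{Z}^r$ the Jordan totient quotient is $J_{\mathbf e}(n)=\prod_{i=1}^r J_i(n)^{e_i}=n^w\prod_{p\mid n}\prod_{i=1}^r(1-p^{-i})^{e_i}$, where $w=\sum_i ie_i$ is its weight. Define $\mathfrak{S}_{\mathbf e}=\prod_p\left(1+\frac{J_{\mathbf e}(p)p^{-w}-1}{p}\right)$. *)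

From Stdlib Require Import Reals ZArith Znumtheory Arith List Bool.
Open Scope R_scope.

Definition Rprod (l : list nat) (f : nat -> R) : R :=
  fold_right (fun p acc => f p * acc) 1 l.

Definition isprimeb (p : nat) : bool :=
  if prime_dec (Z.of_nat p) then true else false.

Definition primes_upto (N : nat) : list nat :=
  filter isprimeb (seq 0 (S N)).

Definition prime_divisors (n : nat) : list nat :=
  filter (fun p => isprimeb p && Nat.eqb (n mod p) 0) (seq 0 (S n)).

Definition jordan (k n : nat) : R :=
  INR n ^ k * Rprod (prime_divisors n) (fun p => 1 - / (INR p ^ k)).

Definition ecoef (e : list Z) (i : nat) : Z := nth (i - 1) e 0%Z.

Definition jtq (e : list Z) (n : nat) : R :=
  Rprod (seq 1 (length e)) (fun i => powerRZ (jordan i n) (ecoef e i)).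

Definition weight (e : list Z) : Z :=
  fold_right (fun i acc => (Z.of_nat i * ecoef e i + acc)%Z) 0%Z (seq 1 (length e)).

Definition sing_factor (e : list Z) (p : nat) : R :=
  1 + (jtq e p * powerRZ (INR p) (- weight e) - 1) / INR p.

Definition sing_partial (e : list Z) (N : nat) : R :=
  Rprod (primes_upto N) (sing_factor e).

Definition jtq_sum (e : list Z) (N : nat) : R :=
  fold_right (fun n acc => jtq e n + acc) 0 (seq 1 N).

(* Write F_e(u) = prod_{i=1}^r (1 - u^i)^{e_i}.  When the weight vanishes the
   powers of n cancel in J_e(n), so J_e(n) = prod_{p | n} F_e(1/p): the
   function J_e is multiplicative and depends only on the set of primes
   dividing n.  Put g(p) = F_e(1/p) - 1.  Expanding the product over all primes
   p <= N gives J_e(n) = sum_d g(d) [d | n], the sum running over squarefree d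
   built from those primes with g extended multiplicatively.  Summing over
   n <= N and counting multiples, floor(N/d) = N/d + O(1), yields
     sum_{n<=N} J_e(n) = N S_N + O(prod_{p<=N} (1 + |g(p)|)),
   where S_N = prod_{p<=N} (1 + g(p)/p) is the partial Euler product. *)

From Stdlib Require Import Reals ZArith Znumtheory Arith List Lia Lra.
From mathcomp Require Import ssreflect ssrbool ssrfun eqtype ssrnat div prime binomial zify.
Open Scope R_scope.

Section Arithmetic.
Local Open Scope nat_scope.

Lemma modn_Nat (m d : nat) : m %% d = Nat.modulo m d.
Proof.
case: d => [|d]; first by rewrite modn0 Nat.mod_0_r.
apply: (Nat.mod_unique _ _ (m %/ d.+1)); first by apply/ltP; rewrite ltn_mod.
by rewrite {1}(divn_eq m d.+1) mulnC.
Qed.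

Lemma mod_eqb_dvdn (n d : nat) : Nat.eqb (Nat.modulo n d) 0 = (d %| n).
Proof. rewrite /dvdn modn_Nat; by case: Nat.eqb_spec => [->|/eqP /negbTE ->]. Qed.

Lemma dvdn_divide (d n : nat) : (d %| n) <-> Nat.divide d n.
Proof. rewrite /dvdn modn_Nat -Nat.Lcm0.mod_divide; by split => [/eqP|->]. Qed.

Lemma isprimeb_prime (p : nat) : isprimeb p = prime p.
Proof.
rewrite /isprimeb; case: (prime_dec (Z.of_nat p)) => [/prime_alt [p_gt1 no_div]|not_pr].
- symmetry; apply/primeP; split; first by apply/ltP; lia.
  move=> d /dvdn_divide [k def_p].
  have d_le_p : (d <= p)%coq_nat by case: k def_p => [|k] /= def_p; lia.
  have d_neq0 : d <> 0 by move=> d0; rewrite d0 in def_p; lia.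
  case: (Nat.eq_dec d 1) => [->//|d_neq1]; case: (Nat.eq_dec d p) => [->|d_neq_p].
    by rewrite eqxx orbT.
  exfalso; apply: (no_div (Z.of_nat d)); first lia.
  by exists (Z.of_nat k); rewrite def_p Nat2Z.inj_mul.
- symmetry; apply/negP => pr_p; apply: not_pr; apply/prime_alt.
  have p_gt1 := prime_gt1 pr_p; move/ltP in p_gt1.
  split; first lia.
  move=> z z_bounds [k def_p].
  have k_pos : (0 <= k)%Z by nia.
  have : Z.to_nat z %| p.
    apply/dvdn_divide; exists (Z.to_nat k); apply: Nat2Z.inj.
    by rewrite Nat2Z.inj_mul !Z2Nat.id //; lia.
  by move/primeP: pr_p => [_ pr_p] /pr_p /orP [/eqP|/eqP]; lia.
Qed.

Lemma isprimeb_ge2 (p : nat) : isprimeb p = true -> (2 <= p)%coq_nat.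
Proof. by rewrite isprimeb_prime => /prime_gt1 /ltP; lia. Qed.

Definition prime_list (L : list nat) : Prop := Forall (fun p => isprimeb p = true) L.

Lemma dvdn_prime_mul (p d n : nat) : isprimeb p = true -> ~~ (p %| d) ->
  (p * d %| n) = (p %| n) && (d %| n).
Proof. by rewrite isprimeb_prime => pr_p p_nd; rewrite Gauss_dvd // prime_coprime. Qed.

Lemma prime_dvd_mul_other (q p d : nat) : prime q -> prime p -> q <> p -> q %| p * d -> q %| d.
Proof.
move=> pr_q pr_p q_neq_p; rewrite Euclid_dvdM // => /orP [|//].
by rewrite dvdn_prime2 // => /eqP.
Qed.

Lemma not_dvd_prod_primes (q : nat) (L : list nat) : prime q -> prime_list L ->
  ~ In q L -> ~~ (q %| fold_right Nat.mul 1 L).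
Proof.
move=> pr_q; elim: L => [|p L IH] /= pr_L q_notin; first by rewrite Euclid_dvd1.
inversion pr_L as [|? ? pr_p pr_L']; subst.
apply/negP => /(prime_dvd_mul_other _ _ _ pr_q).
rewrite -isprimeb_prime => /(_ pr_p (fun e => q_notin (or_introl (esym e)))).
by apply/negP; apply: IH => // ?; apply: q_notin; right.
Qed.

Lemma prod_primes_dvd (K : nat) (L : list nat) : NoDup L -> prime_list L ->
  Forall (fun p => p %| K) L -> fold_right Nat.mul 1 L %| K.
Proof.
elim: L => [|p L IH] /= nd_L pr_L dv_L; first by rewrite dvd1n.
inversion nd_L; inversion pr_L; inversion dv_L; subst.
rewrite dvdn_prime_mul //; first by apply/andP; split => //; apply: IH.
by apply: not_dvd_prod_primes => //; rewrite -isprimeb_prime.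
Qed.

Lemma bin_le_pow2 (n m : nat) : 'C(n, m) <= 2 ^ n.
Proof.
elim: n m => [|n IH] [|m] //; try by rewrite bin0 expn_gt0.
by rewrite binS expnS mulSn mul1n leq_add.
Qed.

Lemma prime_dvd_central_binomial (p m : nat) : prime p -> m < p -> p <= m + m ->
  p %| 'C(m + m, m).
Proof.
move=> pr_p m_lt_p p_le_2m.
have p_ndvd_fact k : k < p -> ~~ (p %| k`!).
  elim: k => [|k IH] k_lt; first by rewrite fact0 Euclid_dvd1.
  rewrite factS Euclid_dvdM // negb_or IH ?andbT; last exact: ltnW.
  by apply/negP => /(dvdn_leq (ltn0Sn k)); rewrite leqNgt k_lt.
have : p %| (m + m)`! by apply: dvdn_fact; rewrite prime_gt0.
rewrite -(bin_fact (leq_addr m m)) addnK !Euclid_dvdM //.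
by rewrite (negbTE (p_ndvd_fact _ m_lt_p)) /= orbF.
Qed.

Lemma central_binomial_le (m : nat) : 'C(m + m, m) <= 4 ^ m.
Proof. by rewrite (_ : 4 ^ m = 2 ^ (m + m)) ?bin_le_pow2 // expnD -expnMn. Qed.

End Arithmetic.

Definition Rsum {A} (l : list A) (f : A -> R) : R :=
  fold_right (fun a acc => f a + acc) 0 l.

Lemma Rsum_nil {A} (f : A -> R) : Rsum nil f = 0.
Proof. by []. Qed.

Lemma Rsum_cons {A} (a : A) l f : Rsum (a :: l) f = f a + Rsum l f.
Proof. by []. Qed.

Lemma Rprod_nil (f : nat -> R) : Rprod nil f = 1.
Proof. by []. Qed.

Lemma Rprod_cons (a : nat) l f : Rprod (a :: l) f = f a * Rprod l f.
Proof. by []. Qed.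

Arguments Rsum {A} : simpl never.
Arguments Rprod : simpl never.

Lemma Rsum_0 {A} (l : list A) : Rsum l (fun _ => 0) = 0.
Proof. elim: l => [|a l IH]; rewrite ?Rsum_cons ?Rsum_nil ?IH; ring. Qed.

Section ListSums.
Context {A : Type}.
Implicit Types (l : list A) (f g : A -> R).

Lemma Rsum_app l1 l2 f : Rsum (l1 ++ l2) f = Rsum l1 f + Rsum l2 f.
Proof.
elim: l1 => [|a l IH]; first by rewrite /= Rplus_0_l.
by rewrite -app_comm_cons !Rsum_cons IH Rplus_assoc.
Qed.

Lemma Rsum_ext l f g : (forall a, In a l -> f a = g a) -> Rsum l f = Rsum l g.
Proof.
elim: l => [|a l IH] // fg; rewrite !Rsum_cons fg ?IH //; last by left.
by move=> ? ?; apply: fg; right.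
Qed.

Lemma Rsum_le l f g : (forall a, In a l -> f a <= g a) -> Rsum l f <= Rsum l g.
Proof.
elim: l => [|a l IH] fg; first by apply: Rle_refl.
rewrite !Rsum_cons; apply: Rplus_le_compat; first by apply: fg; left.
by apply: IH => ? ?; apply: fg; right.
Qed.

Lemma Rsum_plus l f g : Rsum l (fun a => f a + g a) = Rsum l f + Rsum l g.
Proof. elim: l => [|a l IH]; rewrite ?Rsum_cons ?Rsum_nil ?IH; ring. Qed.

Lemma Rsum_scal l c f : Rsum l (fun a => c * f a) = c * Rsum l f.
Proof. elim: l => [|a l IH]; rewrite ?Rsum_cons ?Rsum_nil ?IH; ring. Qed.

Lemma Rsum_const l (w : R) : Rsum l (fun _ => w) = w * INR (length l).
Proof.
elim: l => [|a l IH]; first by rewrite Rsum_nil Rmult_0_r.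
by rewrite Rsum_cons IH (_ : length (a :: l) = S (length l)) // S_INR; ring.
Qed.

Lemma Rsum_map {B} l (h : A -> B) (f : B -> R) : Rsum (map h l) f = Rsum l (fun a => f (h a)).
Proof. by elim: l => [|a l IH] //; rewrite [map _ _]/= !Rsum_cons IH. Qed.

Lemma Rsum_abs l f : Rabs (Rsum l f) <= Rsum l (fun a => Rabs (f a)).
Proof.
elim: l => [|a l IH]; first by rewrite Rabs_R0; apply: Rle_refl.
by rewrite !Rsum_cons; apply: Rle_trans (Rabs_triang _ _) _; lra.
Qed.

Lemma Rsum_filter (P : A -> bool) l f :
  Rsum (filter P l) f = Rsum l (fun a => if P a then f a else 0).
Proof.
by elim: l => [|a l IH] //; rewrite [filter _ _]/= [in RHS]Rsum_cons; case: (P a); rewrite ?Rsum_cons IH ?Rplus_0_l.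
Qed.

Lemma Rsum_filter_le (P : A -> bool) l f : (forall a, In a l -> 0 <= f a) ->
  Rsum (filter P l) f <= Rsum l f.
Proof.
move=> f_ge0; rewrite Rsum_filter; apply: Rsum_le => a a_in.
by case: (P a); [apply: Rle_refl | apply: f_ge0].
Qed.

End ListSums.

Lemma Rsum_swap {A B} (l : list A) (l' : list B) (h : A -> B -> R) :
  Rsum l (fun a => Rsum l' (h a)) = Rsum l' (fun b => Rsum l (fun a => h a b)).
Proof.
elim: l => [|a l IH]; first by rewrite (Rsum_0 l').
by rewrite Rsum_cons IH -Rsum_plus; apply: Rsum_ext.
Qed.

Section ListProducts.
Implicit Types (l : list nat) (f g : nat -> R).

Lemma Rprod_app l1 l2 f : Rprod (l1 ++ l2) f = Rprod l1 f * Rprod l2 f.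
Proof.
elim: l1 => [|a l IH]; first by rewrite /= Rmult_1_l.
by rewrite -app_comm_cons !Rprod_cons IH Rmult_assoc.
Qed.

Lemma Rprod_ext l f g : (forall a, In a l -> f a = g a) -> Rprod l f = Rprod l g.
Proof.
elim: l => [|a l IH] // fg; rewrite !Rprod_cons fg ?IH //; last by left.
by move=> ? ?; apply: fg; right.
Qed.

Lemma Rprod_mult l f g : Rprod l (fun a => f a * g a) = Rprod l f * Rprod l g.
Proof. elim: l => [|a l IH]; rewrite ?Rprod_cons ?Rprod_nil ?IH; ring. Qed.

Lemma Rprod_1 l : Rprod l (fun _ => 1) = 1.
Proof. elim: l => [|a l IH]; rewrite ?Rprod_cons ?Rprod_nil ?IH; ring. Qed.

Lemma Rprod_swap l1 l2 (h : nat -> nat -> R) :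
  Rprod l1 (fun a => Rprod l2 (h a)) = Rprod l2 (fun b => Rprod l1 (fun a => h a b)).
Proof.
elim: l1 => [|a l IH]; first by rewrite (Rprod_1 l2).
by rewrite Rprod_cons IH -Rprod_mult.
Qed.

Lemma Rprod_filter (P : nat -> bool) l f :
  Rprod (filter P l) f = Rprod l (fun a => if P a then f a else 1).
Proof.
by elim: l => [|a l IH] //; rewrite [filter _ _]/= [in RHS]Rprod_cons; case: (P a); rewrite ?Rprod_cons IH ?Rmult_1_l.
Qed.

Lemma Rprod_powerRZ l f z : powerRZ (Rprod l f) z = Rprod l (fun a => powerRZ (f a) z).
Proof.
elim: l => [|a l IH]; first exact: powerRZ_R1.
by rewrite !Rprod_cons powerRZ_mult IH.
Qed.

Lemma Rprod_Rpower l x h : 0 < x -> Rprod l (fun a => Rpower x (h a)) = Rpower x (Rsum l h).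
Proof.
move=> x_gt0; elim: l => [|a l IH]; first by rewrite Rpower_O.
by rewrite Rprod_cons Rsum_cons IH Rpower_plus.
Qed.

Lemma Rprod_exp l h : Rprod l (fun a => exp (h a)) = exp (Rsum l h).
Proof.
elim: l => [|a l IH]; first by rewrite exp_0.
by rewrite Rprod_cons Rsum_cons IH exp_plus.
Qed.

Lemma Rprod_pos l f : (forall a, In a l -> 0 < f a) -> 0 < Rprod l f.
Proof.
elim: l => [|a l IH] f_pos; first exact: Rlt_0_1.
rewrite Rprod_cons; apply: Rmult_lt_0_compat; first by apply: f_pos; left.
by apply: IH => ? ?; apply: f_pos; right.
Qed.

Lemma Rprod_le l f g : (forall a, In a l -> 0 <= f a <= g a) -> Rprod l f <= Rprod l g.
Proof.
move=> fg; suff : 0 <= Rprod l f <= Rprod l g by case.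
elim: l fg => [|a l IH] fg; first by split; [apply: Rle_0_1 | apply: Rle_refl].
have [fa_ge0 fa_le] := fg a (or_introl erefl).
have [prod_ge0 prod_le] := IH (fun b b_in => fg b (or_intror b_in)).
rewrite !Rprod_cons; split; first exact: Rmult_le_pos.
exact: Rmult_le_compat.
Qed.

Lemma Rprod_deviation l x :
  Rabs (Rprod l (fun a => 1 + x a) - 1) <= Rprod l (fun a => 1 + Rabs (x a)) - 1.
Proof.
elim: l => [|a l IH]; first by rewrite Rprod_nil Rminus_diag Rabs_R0; apply: Rle_refl.
rewrite !Rprod_cons.
set P := Rprod l _ in IH *; set Q := Rprod l _ in IH *.
have P_le_Q : Rabs P <= Q.
  by have := Rabs_triang (P - 1) 1; rewrite Rabs_R1 (_ : P - 1 + 1 = P); lra.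
rewrite (_ : (1 + x a) * P - 1 = x a * P + (P - 1)); last ring.
apply: Rle_trans (Rabs_triang _ _) _; rewrite Rabs_mult.
have := Rmult_le_compat_l _ _ _ (Rabs_pos (x a)) P_le_Q; lra.
Qed.

Lemma Rprod_1abs_le_exp l x :
  Rprod l (fun p => 1 + Rabs (x p)) <= exp (Rsum l (fun p => Rabs (x p))).
Proof.
rewrite -Rprod_exp; apply: Rprod_le => p _; split; last exact: exp_ineq1_le.
by have := Rabs_pos (x p); lra.
Qed.

End ListProducts.

Lemma In_primes_upto (p N : nat) : In p (primes_upto N) <-> isprimeb p = true /\ (p <= N)%coq_nat.
Proof. rewrite /primes_upto filter_In in_seq; split => -[? ?]; split => //; lia. Qed.

Lemma NoDup_primes_upto (N : nat) : NoDup (primes_upto N).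
Proof. exact: NoDup_filter (seq_NoDup _ _). Qed.

Lemma prime_list_primes_upto (N : nat) : prime_list (primes_upto N).
Proof. by apply/Forall_forall => p /In_primes_upto []. Qed.

Definition primes_between (N M : nat) : list nat := filter isprimeb (seq (S N) (M - N)).

Lemma prime_list_primes_between (N M : nat) : prime_list (primes_between N M).
Proof. by apply/Forall_forall => p /filter_In []. Qed.

Lemma primes_upto_split (N M : nat) : (N <= M)%coq_nat ->
  primes_upto M = primes_upto N ++ primes_between N M.
Proof.
move=> N_le_M; rewrite /primes_upto /primes_between -filter_app -seq_app.
by congr (filter _ (seq _ _)); lia.
Qed.

Lemma primes_upto_S (m : nat) :
  primes_upto (S m) = primes_upto m ++ (if isprimeb (S m) then S m :: nil else nil).
Proof. by rewrite /primes_upto seq_S filter_app /=; case: (isprimeb (S m)). Qed.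

Lemma filter_none {A} (P : A -> bool) (l : list A) :
  (forall a, In a l -> P a = false) -> filter P l = nil.
Proof. by move=> P_false; rewrite -(filter_false l); apply: filter_ext_in. Qed.

Lemma filter_filter_andb {A} (P Q : A -> bool) (l : list A) :
  filter Q (filter P l) = filter (fun a => P a && Q a) l.
Proof. by elim: l => [|a l IH] //=; case: (P a) => //=; case: (Q a); rewrite IH. Qed.

Lemma prime_divisors_filter (n N : nat) : (1 <= n)%coq_nat -> (n <= N)%coq_nat ->
  prime_divisors n = filter (fun p => Nat.eqb (Nat.modulo n p) 0) (primes_upto N).
Proof.
move=> n_ge1 n_le_N; rewrite /prime_divisors /primes_upto filter_filter_andb.
rewrite (_ : S N = (S n + (N - n))%coq_nat); last lia.
rewrite seq_app filter_app [X in _ ++ X]filter_none ?app_nil_r // => a /in_seq a_range.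
rewrite Nat.mod_small; last lia.
by case: (isprimeb a) => //=; apply/Nat.eqb_neq; lia.
Qed.

Lemma prime_divisors_prime (p : nat) : isprimeb p = true -> prime_divisors p = p :: nil.
Proof.
move=> pr_p; have p_ge2 := isprimeb_ge2 _ pr_p.
rewrite /prime_divisors seq_S filter_app [X in X ++ _]filter_none.
  by rewrite /= pr_p Nat.Div0.mod_same.
move=> q /in_seq q_range.
case pr_q: (isprimeb q) => //=; rewrite mod_eqb_dvdn; apply/negP => q_dvd_p.
move: pr_p; rewrite isprimeb_prime => /primeP [_ /(_ q q_dvd_p) /orP [/eqP|/eqP]].
  by have := isprimeb_ge2 _ pr_q; lia.
lia.
Qed.

Definition count_multiples (d N : nat) : nat :=
  length (filter (fun n => Nat.eqb (Nat.modulo n d) 0) (seq 1 N)).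

Lemma count_multiples_spec (d N : nat) : (1 <= d)%coq_nat ->
  (d * count_multiples d N <= N)%coq_nat /\ (N < d * (count_multiples d N + 1))%coq_nat.
Proof.
rewrite /count_multiples => d_ge1; elim: N => [|N IH]; first by rewrite /=; lia.
rewrite seq_S filter_app length_app /=.
set c := length _ in IH *.
case: (Nat.eqb_spec (Nat.modulo (1 + N) d) 0) => [/Nat.Lcm0.mod_divide [m def_N] | d_ndvd] /=.
  have m_gt_c : (c < m)%coq_nat by nia.
  have m_le : (m <= c + 1)%coq_nat by nia.
  have m_eq : m = (c + 1)%coq_nat by lia.
  by rewrite m_eq in def_N; nia.
suff : (1 + N)%coq_nat <> (d * (c + 1))%coq_nat by lia.
move=> def_N; apply: d_ndvd.
rewrite (_ : (1 + N)%N = (d * (c + 1))%coq_nat); last lia.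
by rewrite Nat.mul_comm Nat.Div0.mod_mul.
Qed.

Lemma count_multiples_real (d N : nat) : (1 <= d)%coq_nat ->
  INR N / INR d - 1 < INR (count_multiples d N) <= INR N / INR d.
Proof.
move=> d_ge1; have [lower upper] := count_multiples_spec d N d_ge1.
move/le_INR: lower; move/lt_INR: upper; rewrite !mult_INR plus_INR /= => upper lower.
have d_pos : 0 < INR d by apply: lt_0_INR; lia.
split; [apply: (Rmult_lt_reg_l (INR d)) | apply: (Rmult_le_reg_l (INR d))] => //;
  field_simplify; lra.
Qed.

Lemma Rsum_multiples (d N : nat) (w : R) :
  Rsum (seq 1 N) (fun n => if Nat.eqb (Nat.modulo n d) 0 then w else 0) =
  w * INR (count_multiples d N).
Proof. by rewrite -Rsum_const -(Rsum_filter _ _ (fun _ => w)). Qed.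

(* Squarefree expansion of a product over distinct primes.  For a list L of
   primes and g : nat -> R, [sqfree_terms g L] lists the pairs (d, g(d)) with
   d the product of a sublist of L and g(d) the product of g over it. *)

Fixpoint sqfree_terms (g : nat -> R) (L : list nat) : list (nat * R) :=
  match L with
  | nil => (1%nat, 1) :: nil
  | p :: L' => sqfree_terms g L' ++
                 map (fun dw => (Nat.mul p (fst dw), g p * snd dw)) (sqfree_terms g L')
  end.

Section SquarefreeExpansion.
Variable g : nat -> R.

Lemma sqfree_terms_ge1 (L : list nat) : prime_list L ->
  forall dw, In dw (sqfree_terms g L) -> (1 <= fst dw)%coq_nat.
Proof.
elim: L => [|p L IH] pr_L dw /= dw_in; first by case: dw_in => [<-|[]] /=; lia.
inversion pr_L as [|? ? pr_p pr_L']; subst.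
case: (in_app_or _ _ _ dw_in); first exact: IH.
case/in_map_iff => dw' [<- dw'_in] /=.
by have := IH pr_L' dw' dw'_in; have := isprimeb_ge2 p pr_p; nia.
Qed.

Lemma sqfree_terms_ndvd (L : list nat) : prime_list L ->
  forall dw, In dw (sqfree_terms g L) ->
  forall q, isprimeb q = true -> ~ In q L -> ~~ (q %| fst dw).
Proof.
elim: L => [|p L IH] pr_L dw /= dw_in q pr_q q_notin.
  by case: dw_in => [<-|[]] /=; rewrite Euclid_dvd1 // -isprimeb_prime.
inversion pr_L as [|? ? pr_p pr_L']; subst.
case: (in_app_or _ _ _ dw_in) => {dw_in} [dw_in|]; first by apply: IH => // q_in; apply: q_notin; right.
case/in_map_iff => dw' [<- dw'_in] /=; apply/negP.
move/(prime_dvd_mul_other q p); rewrite -!isprimeb_prime.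
move/(_ pr_q pr_p (fun e => q_notin (or_introl (esym e)))); apply/negP.
by apply: IH => // q_in; apply: q_notin; right.
Qed.

Lemma sqfree_expand (L : list nat) (n : nat) : prime_list L -> NoDup L ->
  Rprod L (fun p => if Nat.eqb (Nat.modulo n p) 0 then 1 + g p else 1) =
  Rsum (sqfree_terms g L) (fun dw => if Nat.eqb (Nat.modulo n (fst dw)) 0 then snd dw else 0).
Proof.
elim: L => [|p L IH] pr_L nd_L.
  by rewrite /Rprod /Rsum /=; ring.
inversion pr_L as [|? ? pr_p pr_L']; inversion nd_L as [|? ? p_notin nd_L']; subst.
rewrite Rprod_cons /= Rsum_app Rsum_map IH //=.
have split_dvd dw : In dw (sqfree_terms g L) ->
    Nat.eqb (Nat.modulo n (p * fst dw)) 0 =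
    Nat.eqb (Nat.modulo n p) 0 && Nat.eqb (Nat.modulo n (fst dw)) 0.
  move=> dw_in; rewrite !mod_eqb_dvdn dvdn_prime_mul //.
  exact: (sqfree_terms_ndvd L pr_L' dw dw_in p pr_p p_notin).
rewrite [X in _ = _ + X](Rsum_ext _ _ (fun dw => if Nat.eqb (Nat.modulo n p) 0 then
           g p * (if Nat.eqb (Nat.modulo n (fst dw)) 0 then snd dw else 0) else 0)).
  by case: (Nat.eqb _ 0); rewrite ?Rsum_scal ?Rsum_0; ring.
by move=> dw dw_in; rewrite split_dvd //; case: (Nat.eqb _ 0); case: (Nat.eqb _ 0) => /=; ring.
Qed.

Lemma sqfree_div (L : list nat) : prime_list L ->
  Rsum (sqfree_terms g L) (fun dw => snd dw / INR (fst dw)) = Rprod L (fun p => 1 + g p / INR p).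
Proof.
elim: L => [|p L IH] pr_L; first by rewrite /Rprod /Rsum /=; field.
inversion pr_L as [|? ? pr_p pr_L']; subst.
rewrite Rprod_cons /= Rsum_app Rsum_map -IH //.
rewrite [X in _ + X](Rsum_ext _ _ (fun dw => (g p / INR p) * (snd dw / INR (fst dw)))).
  by rewrite Rsum_scal; ring.
move=> dw dw_in /=; rewrite mult_INR.
have d_ge1 := sqfree_terms_ge1 L pr_L' dw dw_in; have p_ge2 := isprimeb_ge2 p pr_p.
have p_neq0 : INR p <> 0 by apply: not_0_INR; lia.
have d_neq0 : INR (fst dw) <> 0 by apply: not_0_INR; lia.
by field.
Qed.

Lemma sqfree_abs (L : list nat) :
  Rsum (sqfree_terms g L) (fun dw => Rabs (snd dw)) = Rprod L (fun p => 1 + Rabs (g p)).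
Proof.
elim: L => [|p L IH]; first by rewrite /Rprod /Rsum /= Rabs_R1; ring.
rewrite Rprod_cons /= Rsum_app Rsum_map -IH.
rewrite [X in _ + X](Rsum_ext _ _ (fun dw => Rabs (g p) * Rabs (snd dw))) ?Rsum_scal; first ring.
by move=> dw _; apply: Rabs_mult.
Qed.

End SquarefreeExpansion.

Definition Fe (e : list Z) (u : R) : R :=
  Rprod (seq 1 (length e)) (fun i => powerRZ (1 - u ^ i) (ecoef e i)).

Definition local_factor (e : list Z) (p : nat) : R := Fe e (/ INR p).
Definition local_dev (e : list Z) (p : nat) : R := local_factor e p - 1.

Lemma weight_IZR (e : list Z) :
  IZR (weight e) = Rsum (seq 1 (length e)) (fun i => INR i * IZR (ecoef e i)).
Proof.
rewrite /weight; elim: (seq 1 (length e)) => [|a l IH] //=.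
by rewrite Rsum_cons plus_IZR mult_IZR IH -INR_IZR_INZ.
Qed.

Lemma powerRZ_pow_Rpower (x : R) (i : nat) (z : Z) : 0 < x ->
  powerRZ (x ^ i) z = Rpower x (INR i * IZR z).
Proof.
move=> x_pos; rewrite powerRZ_Rpower; last exact: pow_lt.
by rewrite /Rpower ln_pow //; congr exp; ring.
Qed.

Lemma jtq_local (e : list Z) (n : nat) : weight e = 0%Z -> (1 <= n)%coq_nat ->
  jtq e n = Rprod (prime_divisors n) (local_factor e).
Proof.
move=> w0 n_ge1; have n_pos : 0 < INR n by apply: lt_0_INR; lia.
rewrite /jtq /jordan (Rprod_ext _ _ (fun i => Rpower (INR n) (INR i * IZR (ecoef e i)) *
   Rprod (prime_divisors n) (fun p => powerRZ (1 - / INR p ^ i) (ecoef e i)))).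
  rewrite Rprod_mult Rprod_Rpower // -weight_IZR w0 Rpower_O // Rmult_1_l Rprod_swap.
  by apply: Rprod_ext => p _; apply: Rprod_ext => i _; rewrite pow_inv.
by move=> i _; rewrite powerRZ_mult Rprod_powerRZ powerRZ_pow_Rpower.
Qed.

Lemma sing_factor_local (e : list Z) (p : nat) : weight e = 0%Z -> isprimeb p = true ->
  sing_factor e p = 1 + local_dev e p / INR p.
Proof.
move=> w0 pr_p; have p_ge2 := isprimeb_ge2 p pr_p.
rewrite /sing_factor w0 (_ : (- 0)%Z = 0%Z) // powerRZ_O Rmult_1_r jtq_local //; last lia.
by rewrite prime_divisors_prime // Rprod_cons Rprod_nil Rmult_1_r.
Qed.

Lemma pow_le1 (u : R) (n : nat) : 0 <= u <= 1 -> u ^ n <= 1.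
Proof.
move=> u_bounds; elim: n => [|n IH] /=; first lra.
by have := pow_le u n (proj1 u_bounds); nra.
Qed.

Lemma INR_ge2 (p : nat) : (2 <= p)%coq_nat -> 2 <= INR p.
Proof. by move=> p_ge2; rewrite (_ : 2 = INR 2) //; apply: le_INR. Qed.

Lemma INR_ge1 (p : nat) : (1 <= p)%coq_nat -> 1 <= INR p.
Proof. by move=> p_ge1; rewrite (_ : 1 = INR 1) //; apply: le_INR. Qed.

(* Each factor 1 - p^{-i} is positive, hence so is F_e(1/p). *)
Lemma local_factor_pos (e : list Z) (p : nat) : (2 <= p)%coq_nat -> 0 < local_factor e p.
Proof.
move=> p_ge2; have p_ge2' := INR_ge2 p p_ge2.
have u_bounds : 0 < / INR p < 1.
  split; first by apply: Rinv_0_lt_compat; lra.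
  by rewrite -Rinv_1; apply: Rinv_lt_contravar; lra.
apply: Rprod_pos => -[|i] /in_seq i_range; first lia.
apply: powerRZ_lt => /=.
by have := pow_le1 (/ INR p) i ltac:(lra); have := pow_le (/ INR p) i ltac:(lra); nra.
Qed.

(* First-order expansions at 0: [expands a h] says h(u) = 1 + a u + O(u^2)
   uniformly for 0 < u <= 1/2.  Such expansions multiply, so the expansion
   F_e(u) = 1 - e_1 u + O(u^2) follows from those of the factors. *)

Definition expands (a : R) (h : R -> R) : Prop :=
  exists D, 0 <= D /\ forall u, 0 < u <= / 2 -> Rabs (h u - 1 - a * u) <= D * u ^ 2.

Lemma expands_ext (a a' : R) (h h' : R -> R) :
  a = a' -> (forall u, 0 < u <= / 2 -> h u = h' u) -> expands a h -> expands a' h'.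
Proof. move=> <- hh' [D [D_ge0 hD]]; exists D; split => // u u_range; rewrite -hh' //; exact: hD. Qed.

Lemma expands_1 : expands 0 (fun _ => 1).
Proof. exists 0; split => [|u _]; first lra; rewrite (_ : 1 - 1 - 0 * u = 0) ?Rabs_R0; lra. Qed.

Lemma expands_mul (a b : R) (h1 h2 : R -> R) :
  expands a h1 -> expands b h2 -> expands (a + b) (fun u => h1 u * h2 u).
Proof.
move=> [D1 [D1_ge0 h1D]] [D2 [D2_ge0 h2D]].
have := Rabs_pos a; have := Rabs_pos b => b_ge0 a_ge0.
exists (Rabs a * Rabs b + D1 * (1 + Rabs b / 2 + D2 / 4) + D2 * (1 + Rabs a / 2)).
split.
  by apply: Rplus_le_le_0_compat; [apply: Rplus_le_le_0_compat|]; try apply: Rmult_le_pos; lra.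
move=> u u_range; have E1 := h1D u u_range; have E2 := h2D u u_range.
set e1 := h1 u - 1 - a * u in E1; set e2 := h2 u - 1 - b * u in E2.
rewrite (_ : h1 u * h2 u - 1 - (a + b) * u = e1 * h2 u + e2 * (1 + a * u) + a * b * u ^ 2);
  last by rewrite /e1 /e2; ring.
have u2_le : u ^ 2 <= / 4 by rewrite /=; nra.
have u2_ge0 : 0 <= u ^ 2 by rewrite /=; nra.
have h2_bound : Rabs (h2 u) <= 1 + Rabs b / 2 + D2 / 4.
  rewrite (_ : h2 u = 1 + b * u + e2); last by rewrite /e2; ring.
  apply: Rle_trans (Rabs_triang _ _) _; apply: Rle_trans (Rplus_le_compat_r _ _ _ (Rabs_triang _ _)) _.
  rewrite Rabs_R1 Rabs_mult (Rabs_right u); last lra.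
  have bu_le : Rabs b * u <= Rabs b / 2 by nra.
  have D2u_le : D2 * u ^ 2 <= D2 / 4 by nra.
  lra.
have lin_bound : Rabs (1 + a * u) <= 1 + Rabs a / 2.
  apply: Rle_trans (Rabs_triang _ _) _; rewrite Rabs_R1 Rabs_mult (Rabs_right u); nra.
apply: Rle_trans (Rabs_triang _ _) _; apply: Rle_trans (Rplus_le_compat_r _ _ _ (Rabs_triang _ _)) _.
rewrite [Rabs (e1 * _)]Rabs_mult [Rabs (e2 * _)]Rabs_mult [Rabs (a * b * _)]Rabs_mult.
rewrite (Rabs_right (u ^ 2)) ?Rabs_mult; last lra.
have := Rmult_le_compat _ _ _ _ (Rabs_pos e1) (Rabs_pos _) E1 h2_bound.
have := Rmult_le_compat _ _ _ _ (Rabs_pos e2) (Rabs_pos _) E2 lin_bound.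
lra.
Qed.

Lemma expands_pow (a : R) (h : R -> R) (n : nat) :
  expands a h -> expands (INR n * a) (fun u => h u ^ n).
Proof.
move=> ha; elim: n => [|n IH].
  by apply: expands_ext expands_1 => [|u _] /=; ring.
by apply: expands_ext (expands_mul _ _ _ _ ha IH) => [|u _]; [rewrite S_INR | rewrite /=]; ring.
Qed.

(* The linear coefficient of 1 - u^i: -1 for i = 1, and 0 for i >= 2. *)
Definition lin_coef (i : nat) : R := if Nat.eqb i 1 then -1 else 0.

Lemma pow_le_sq (u : R) (i : nat) : 0 <= u <= 1 -> (2 <= i)%coq_nat -> u ^ i <= u ^ 2.
Proof.
move=> u_range i_ge2; rewrite (_ : i = (2 + (i - 2))%coq_nat) ?pow_add; last lia.
by have := pow_le1 u (i - 2) u_range; have := pow_le u 2 (proj1 u_range); nra.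
Qed.

Lemma expands_one_minus_pow (i : nat) : (1 <= i)%coq_nat ->
  expands (lin_coef i) (fun u => 1 - u ^ i).
Proof.
rewrite /lin_coef => i_ge1; case: (Nat.eqb_spec i 1) => [->|i_neq1].
  exists 0; split => [|u _]; first lra.
  by rewrite (_ : 1 - u ^ 1 - 1 - -1 * u = 0) /= ?Rabs_R0; [nra | ring].
exists 1; split => [|u u_range]; first lra.
rewrite (_ : 1 - u ^ i - 1 - 0 * u = - u ^ i); last ring.
rewrite Rabs_Ropp Rabs_right ?Rmult_1_l; first by apply: pow_le_sq; [lra | lia].
by apply/Rle_ge/pow_le; lra.
Qed.

Lemma expands_inv_one_minus_pow (i : nat) : (1 <= i)%coq_nat ->
  expands (- lin_coef i) (fun u => / (1 - u ^ i)).
Proof.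
rewrite /lin_coef => i_ge1; exists 2; split => [|u u_range]; first lra.
have ui_le : u ^ i <= u.
  by case: i i_ge1 => [|i] i_ge1 /=; [lia | have := pow_le1 u i ltac:(lra); nra].
have inv_le2 : / (1 - u ^ i) <= 2.
  by rewrite -[2]Rinv_inv; apply: Rinv_le_contravar; lra.
have inv_ge0 : 0 <= / (1 - u ^ i) by apply/Rlt_le/Rinv_0_lt_compat; lra.
have ui_ge0 : 0 <= u ^ i by apply: pow_le; lra.
case: (Nat.eqb_spec i 1) => [i1|i_neq1].
  rewrite i1 pow_1 in inv_le2 inv_ge0 *.
  rewrite (_ : / (1 - u) - 1 - - -1 * u = u ^ 2 / (1 - u)); last by rewrite /=; field; lra.
  by rewrite Rabs_right /Rdiv /=; nra.
have ui_le2 := pow_le_sq u i ltac:(lra) ltac:(lia).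
rewrite (_ : / (1 - u ^ i) - 1 - - 0 * u = u ^ i / (1 - u ^ i)); last by field; lra.
by rewrite Rabs_right /Rdiv; nra.
Qed.

Lemma expands_factor (i : nat) (z : Z) : (1 <= i)%coq_nat ->
  expands (IZR z * lin_coef i) (fun u => powerRZ (1 - u ^ i) z).
Proof.
move=> i_ge1; case: z => [|q|q] /=.
- by apply: expands_ext expands_1 => [|u _] //; ring.
- apply: expands_ext (expands_pow _ _ (Pos.to_nat q) (expands_one_minus_pow i i_ge1)) => //.
  by rewrite INR_IPR.
- apply: expands_ext (expands_pow _ _ (Pos.to_nat q) (expands_inv_one_minus_pow i i_ge1)).
    by rewrite INR_IPR /IZR; ring.
  by move=> u _; rewrite pow_inv.
Qed.

Lemma expands_prod (l : list nat) (z : nat -> Z) : (forall i, In i l -> (1 <= i)%coq_nat) ->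
  expands (Rsum l (fun i => IZR (z i) * lin_coef i))
          (fun u => Rprod l (fun i => powerRZ (1 - u ^ i) (z i))).
Proof.
elim: l => [|i l IH] l_ge1; first by apply: expands_ext expands_1.
apply: expands_ext (expands_mul _ _ _ _ (expands_factor i (z i) (l_ge1 i (or_introl erefl)))
                                  (IH (fun j j_in => l_ge1 j (or_intror j_in)))) => //.
Qed.

Lemma expands_Fe (e : list Z) : expands (- IZR (ecoef e 1)) (Fe e).
Proof.
apply: expands_ext (expands_prod (seq 1 (length e)) (ecoef e) _) => //; last first.
  by move=> i /in_seq; lia.
case: e => [|z e]; first by rewrite Rsum_nil /ecoef /=; ring.
rewrite (_ : seq 1 (length (z :: e)) = 1%nat :: seq 2 (length e)) // Rsum_cons (Rsum_ext _ _ (fun _ => 0)) ?Rsum_0 /lin_coef /=; first ring.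
by move=> i /in_seq i_range; rewrite (_ : Nat.eqb i 1 = false) ?Rmult_0_r //; apply/Nat.eqb_neq; lia.
Qed.

Lemma local_dev_bound (e : list Z) : exists D, 0 <= D /\ forall p, (2 <= p)%coq_nat ->
  Rabs (local_dev e p) <= INR (Z.abs_nat (ecoef e 1)) / INR p + D / INR p ^ 2.
Proof.
have [D [D_ge0 FeD]] := expands_Fe e; exists D; split => // p p_ge2.
have p_ge2' := INR_ge2 p p_ge2.
have u_range : 0 < / INR p <= / 2.
  by split; [apply: Rinv_0_lt_compat | apply: Rinv_le_contravar]; lra.
have := FeD _ u_range; rewrite /local_dev /local_factor pow_inv.
set a := IZR (ecoef e 1); set F := Fe e (/ INR p) => F_close.
rewrite (_ : F - 1 = (F - 1 - - a * / INR p) + (- a * / INR p)); last ring.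
apply: Rle_trans (Rabs_triang _ _) _.
rewrite Rabs_mult Rabs_Ropp (Rabs_right (/ INR p)); last by apply/Rle_ge/Rlt_le; lra.
have -> : Rabs a = INR (Z.abs_nat (ecoef e 1)).
  by rewrite /a Rabs_Zabs INR_IZR_INZ; congr IZR; lia.
rewrite /Rdiv; lra.
Qed.

(* Chebyshev's and Mertens' bounds.  The primes in (m, 2m] divide the central
   binomial coefficient, so theta(2m) - theta(m) <= m ln 4 and
   theta(N) <= 2 ln 4 N.  Counting the primes dividing each n <= N then gives
   sum_{p<=N} ln p / p <= ln N + 2 ln 4, and partial summation turns this into
   sum_{p<=N} 1/p <= ln ln N + K. *)

Lemma ln_le_mono (x y : R) : 0 < x -> x <= y -> ln x <= ln y.
Proof. by move=> x_pos [x_lt|<-]; [left; apply: ln_increasing | apply: Rle_refl]. Qed.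

Lemma exp_le_mono (x y : R) : x <= y -> exp x <= exp y.
Proof. by case=> [x_lt|<-]; [left; apply: exp_increasing | apply: Rle_refl]. Qed.

Lemma ln_gt0 (x : R) : 1 < x -> 0 < ln x.
Proof. by move=> x_gt1; rewrite -ln_1; apply: ln_increasing; lra. Qed.

Lemma ln_ge0 (x : R) : 1 <= x -> 0 <= ln x.
Proof. by move=> x_ge1; rewrite -ln_1; apply: ln_le_mono; lra. Qed.

Lemma prod_nat_ge1 (l : list nat) : Forall (fun p => (1 <= p)%coq_nat) l ->
  (1 <= fold_right Nat.mul 1%nat l)%coq_nat.
Proof. by elim: l => [|a l IH] /= l_ge1; [lia | inversion l_ge1; subst; have := IH H2; nia]. Qed.

Lemma prime_list_ge1 (l : list nat) : prime_list l -> Forall (fun p => (1 <= p)%coq_nat) l.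
Proof. by apply: Forall_impl => p /isprimeb_ge2; lia. Qed.

Lemma INR_expn (a m : nat) : INR (a ^ m)%N = INR a ^ m.
Proof. by elim: m => [|m IH] //; rewrite expnS mult_INR IH. Qed.

Lemma Rsum_ln_primes (l : list nat) : prime_list l ->
  Rsum l (fun p => ln (INR p)) = ln (INR (fold_right Nat.mul 1%nat l)).
Proof.
move=> pr_l; have := prime_list_ge1 _ pr_l; elim: l {pr_l} => [|a l IH] l_ge1.
  by rewrite ln_1.
inversion l_ge1 as [|? ? a_ge1 l_ge1']; subst.
rewrite Rsum_cons IH //= mult_INR ln_mult //; apply: lt_0_INR; first lia.
by have := prod_nat_ge1 l l_ge1'; lia.
Qed.

Definition theta (N : nat) : R := Rsum (primes_upto N) (fun p => ln (INR p)).

Lemma theta_double (m : nat) : theta (m + m)%coq_nat <= theta m + INR m * ln 4.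
Proof.
rewrite /theta (primes_upto_split m (m + m)); last lia.
rewrite Rsum_app [X in _ + X]Rsum_ln_primes; last exact: prime_list_primes_between.
set l := primes_between m (m + m).
have l_dvd : fold_right Nat.mul 1%nat l %| 'C(m + m, m).
  apply: prod_primes_dvd; [exact: NoDup_filter (seq_NoDup _ _) | exact: prime_list_primes_between |].
  apply/Forall_forall => p /filter_In [/in_seq p_range pr_p].
  by apply: prime_dvd_central_binomial; [rewrite -isprimeb_prime | apply/ltP; lia | apply/leP; lia].
have l_le : (fold_right Nat.mul 1%nat l <= 4 ^ m)%N.
  apply: leq_trans (central_binomial_le m).
  by apply: dvdn_leq l_dvd; rewrite bin_gt0 leq_addr.
have l_ge1 := prod_nat_ge1 l (prime_list_ge1 _ (prime_list_primes_between m (m + m))).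
have := ln_le_mono _ _ (lt_0_INR _ (Nat.lt_le_trans _ _ _ Nat.lt_0_1 l_ge1)) (le_INR _ _ (leP l_le)).
by rewrite INR_expn ln_pow; [rewrite (_ : INR 4 = 4); [lra | rewrite /=; ring] | rewrite /=; lra].
Qed.

Lemma theta_S (m : nat) : theta m <= theta (S m).
Proof.
have := ln_ge0 (INR (S m)) (INR_ge1 (S m) ltac:(lia)).
rewrite /theta primes_upto_S Rsum_app; case: (isprimeb (S m)); rewrite ?Rsum_cons Rsum_nil; lra.
Qed.

Lemma theta_bound (N : nat) : theta N <= 2 * ln 4 * INR N.
Proof.
have ln4_pos : 0 < ln 4 by apply: ln_gt0; lra.
elim/(well_founded_induction lt_wf): N => -[|[|N]] IH.
- by rewrite /theta /primes_upto /= Rsum_nil; lra.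
- by rewrite /theta /primes_upto /= Rsum_nil; lra.
case: (Nat.Even_or_Odd (S (S N))) => [[m def_N]|[m def_N]].
  rewrite (_ : S (S N) = (m + m)%coq_nat); last lia.
  by have := theta_double m; have := IH m ltac:(lia); have := pos_INR m; rewrite plus_INR; nra.
rewrite (_ : S (S N) = (m + (m + 1))%coq_nat); last lia.
have := theta_S (m + (m + 1))%coq_nat.
rewrite (_ : S (m + (m + 1)) = (S m + S m)%coq_nat); last lia.
have := theta_double (S m); have := IH (S m) ltac:(lia); have := INR_ge1 m ltac:(lia).
by rewrite !plus_INR !S_INR /=; nra.
Qed.

(* sum_{p <= N} ln p * floor(N/p) = ln of prod_{n <= N} (prime radical of n) <= N ln N. *)
Lemma sum_ln_primes_multiples (N : nat) :
  Rsum (primes_upto N) (fun p => ln (INR p) * INR (count_multiples p N)) <= INR N * ln (INR N).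
Proof.
set L := primes_upto N.
rewrite -(Rsum_ext _ _ _ (fun p _ => Rsum_multiples p N _)) -Rsum_swap.
rewrite (_ : INR N * ln (INR N) = Rsum (seq 1 N) (fun _ => ln (INR N))); last first.
  by rewrite Rsum_const length_seq; ring.
apply: Rsum_le => n /in_seq n_range.
rewrite -(Rsum_filter (fun p => Nat.eqb (Nat.modulo n p) 0) L (fun p => ln (INR p))).
set l := filter _ L.
have pr_l : prime_list l.
  by apply/Forall_forall => p /filter_In [/In_primes_upto []].
have l_dvd : fold_right Nat.mul 1%nat l %| n.
  apply: prod_primes_dvd => //; first exact: NoDup_filter (NoDup_primes_upto N).
  by apply/Forall_forall => p /filter_In [_]; rewrite mod_eqb_dvdn.
have l_le : (fold_right Nat.mul 1%nat l <= n)%coq_nat.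
  by apply/leP; apply: dvdn_leq l_dvd; apply/ltP; lia.
have := prod_nat_ge1 l (prime_list_ge1 _ pr_l) => l_ge1.
rewrite Rsum_ln_primes //; apply: ln_le_mono; first by apply: lt_0_INR; lia.
by apply: le_INR; lia.
Qed.

Definition ln_sum (N : nat) : R := Rsum (primes_upto N) (fun p => ln (INR p) / INR p).
Definition recip_sum (N : nat) : R := Rsum (primes_upto N) (fun p => / INR p).

Lemma ln_sum_bound (N : nat) : (1 <= N)%coq_nat -> ln_sum N <= ln (INR N) + 2 * ln 4.
Proof.
move=> N_ge1; have N_ge1' := INR_ge1 N N_ge1.
have lower : INR N * ln_sum N - theta N <=
    Rsum (primes_upto N) (fun p => ln (INR p) * INR (count_multiples p N)).
  have -> : INR N * ln_sum N - theta N =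
      Rsum (primes_upto N) (fun p => INR N * (ln (INR p) / INR p) + -1 * ln (INR p)).
    by rewrite Rsum_plus !Rsum_scal /ln_sum /theta; ring.
  apply: Rsum_le => p /In_primes_upto [pr_p _]; have p_ge2 := isprimeb_ge2 p pr_p.
  have := INR_ge2 p p_ge2; have := count_multiples_real p N ltac:(lia).
  move=> count_bounds p_ge2'; have := ln_ge0 (INR p) ltac:(lra) => ln_p_ge0.
  rewrite (_ : INR N * (ln (INR p) / INR p) = ln (INR p) * (INR N / INR p)); last by field; lra.
  by nra.
have := sum_ln_primes_multiples N; have := theta_bound N => ? ?.
apply: (Rmult_le_reg_l (INR N)); lra.
Qed.

Lemma ln_ratio (x y : R) : 0 < x -> x <= y -> 1 - x / y <= ln y - ln x.
Proof.
move=> x_pos x_le_y; have y_pos : 0 < y by lra.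
have := exp_ineq1_le (ln (x / y)); rewrite exp_ln; last exact: Rdiv_lt_0_compat.
by rewrite /Rdiv ln_mult // ?ln_Rinv //; [lra | apply: Rinv_0_lt_compat].
Qed.

(* Partial summation in discrete form: this quantity does not increase with m,
   because the new term of sum 1/p is paid for by the growth of ln ln m. *)
Definition mertens_gap (m : nat) : R :=
  recip_sum m - ln_sum m / ln (INR m) - ln (ln (INR m)) + 2 * ln 4 / ln (INR m).

Lemma mertens_gap_S (m : nat) : (2 <= m)%coq_nat -> mertens_gap (S m) <= mertens_gap m.
Proof.
move=> m_ge2; have m_gt1 : 1 < INR m by have := INR_ge2 m m_ge2; lra.
have m_lt : INR m < INR (S m) by rewrite S_INR; lra.
set x := ln (INR m); set y := ln (INR (S m)); set c := 2 * ln 4.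
have x_pos : 0 < x by apply: ln_gt0.
have x_lt_y : x < y by apply: ln_increasing; lra.
have ln_sum_le : ln_sum m <= x + c by apply: ln_sum_bound; lia.
have inv_diff_ge0 : 0 <= / x - / y.
  have : / y < / x by apply: Rinv_lt_contravar; nra.
  lra.
have step : mertens_gap (S m) = mertens_gap m + (ln_sum m - c) * (/ x - / y) - (ln y - ln x).
  rewrite /mertens_gap /ln_sum /recip_sum primes_upto_S !Rsum_app -/x -/y -/c.
  by case: (isprimeb (S m)); rewrite ?Rsum_cons !Rsum_nil -/y; field; lra.
have := ln_ratio x y x_pos ltac:(lra).
have := Rmult_le_compat_r _ _ _ inv_diff_ge0 (Rplus_le_compat_r (- c) _ _ ln_sum_le).
rewrite (_ : (x + c + - c) * (/ x - / y) = 1 - x / y); last by field; lra.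
lra.
Qed.

Lemma recip_sum_bound : exists K, forall N, (2 <= N)%coq_nat -> recip_sum N <= ln (ln (INR N)) + K.
Proof.
exists (mertens_gap 2 + 1) => N N_ge2.
have gap_le : mertens_gap N <= mertens_gap 2.
  elim: N N_ge2 => [|N IH] N_ge2; first lia.
  case: (Nat.eq_dec N 1) => [-> | N_neq1]; first by apply: Rle_refl.
  by apply: Rle_trans (mertens_gap_S N ltac:(lia)) (IH ltac:(lia)).
have x_pos : 0 < ln (INR N) by apply: ln_gt0; have := INR_ge2 N N_ge2; lra.
have := ln_sum_bound N ltac:(lia) => ln_sum_le.
have : ln_sum N / ln (INR N) <= 1 + 2 * ln 4 / ln (INR N).
  rewrite (_ : 1 + 2 * ln 4 / ln (INR N) = (ln (INR N) + 2 * ln 4) / ln (INR N)); last by field; lra.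
  by apply: Rmult_le_compat_r; [apply/Rlt_le/Rinv_0_lt_compat | ].
move: gap_le; rewrite /mertens_gap; lra.
Qed.

Lemma recip_sq_sum_telescope (a m : nat) : (1 <= a)%coq_nat ->
  Rsum (seq (S a) m) (fun n => / INR n ^ 2) <= / INR a - / INR (a + m).
Proof.
elim: m a => [|m IH] a a_ge1; first by rewrite Rsum_nil addn0; lra.
rewrite (_ : seq (S a) (S m) = S a :: seq (S (S a)) m) // Rsum_cons.
have := IH (S a) ltac:(lia); rewrite addSnnS.
have a_ge1' := INR_ge1 a a_ge1; rewrite S_INR.
have : / (INR a + 1) ^ 2 <= / INR a - / (INR a + 1).
  rewrite (_ : / INR a - / (INR a + 1) = / (INR a * (INR a + 1))); last by field; lra.
  by apply: Rinv_le_contravar; [nra | rewrite /=; nra].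
lra.
Qed.

Lemma recip_sq_ge0 (n : nat) : 0 <= / INR n ^ 2.
Proof.
case: n => [|n]; first by rewrite /= Rmult_0_l Rinv_0; apply: Rle_refl.
by apply/Rlt_le/Rinv_0_lt_compat/pow_lt/lt_0_INR; lia.
Qed.

Lemma recip_sq_sum_primes (N : nat) : Rsum (primes_upto N) (fun p => / INR p ^ 2) <= 2.
Proof.
apply: Rle_trans (Rsum_filter_le _ _ _ (fun n _ => recip_sq_ge0 n)) _.
case: N => [|N]; first by rewrite /= Rsum_cons Rsum_nil /= Rmult_0_l Rinv_0; lra.
rewrite (_ : seq 0 (S (S N)) = 0%nat :: 1%nat :: seq 2 N) // !Rsum_cons.
have := recip_sq_sum_telescope 1 N (le_n 1).
have : 0 <= / INR (1 + N) by apply/Rlt_le/Rinv_0_lt_compat/lt_0_INR; lia.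
by rewrite /= Rmult_0_l Rinv_0 !Rmult_1_l Rinv_1; lra.
Qed.

Lemma recip_sq_sum_between (N M : nat) : (1 <= N)%coq_nat ->
  Rsum (primes_between N M) (fun p => / INR p ^ 2) <= / INR N.
Proof.
move=> N_ge1; apply: Rle_trans (Rsum_filter_le _ _ _ (fun n _ => recip_sq_ge0 n)) _.
have := recip_sq_sum_telescope N (M - N) N_ge1.
have : 0 <= / INR (N + (M - N)) by apply/Rlt_le/Rinv_0_lt_compat/lt_0_INR; lia.
lra.
Qed.

Lemma Un_cv_dist_le (u : nat -> R) (S v c : R) (N0 : nat) : Un_cv u S ->
  (forall n, (N0 <= n)%coq_nat -> Rabs (u n - v) <= c) -> Rabs (S - v) <= c.
Proof.
move=> u_cv u_near; apply: le_epsilon => eps eps_pos.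
have [M0 M0_spec] := u_cv eps eps_pos.
have := M0_spec (Nat.max M0 N0) ltac:(lia); have := u_near (Nat.max M0 N0) ltac:(lia).
rewrite /R_dist; set x := u (Nat.max M0 N0) => near_v near_S.
have := Rabs_triang (S - x) (x - v); rewrite (_ : S - x + (x - v) = S - v); last ring.
by rewrite Rabs_minus_sym in near_S; lra.
Qed.

Lemma Un_cv_lower (u : nat -> R) (S c : R) (N0 : nat) : Un_cv u S ->
  (forall n, (N0 <= n)%coq_nat -> c <= u n) -> c <= S.
Proof.
move=> u_cv u_ge; apply: le_epsilon => eps eps_pos.
have [M0 M0_spec] := u_cv eps eps_pos.
have := M0_spec (Nat.max M0 N0) ltac:(lia); have := u_ge (Nat.max M0 N0) ltac:(lia).
by rewrite /R_dist => ? /Rabs_def2; lra.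
Qed.

Section EulerProduct.
Variables (a : nat -> R) (B : R).
Hypothesis B_ge0 : 0 <= B.
Hypothesis a_small : forall p, isprimeb p = true -> Rabs (a p) <= B / INR p ^ 2.
Hypothesis factor_pos : forall p, isprimeb p = true -> 0 < 1 + a p.

Definition euler_partial (N : nat) : R := Rprod (primes_upto N) (fun p => 1 + a p).

Lemma sum_abs_terms_le (l : list nat) : prime_list l ->
  Rsum l (fun p => Rabs (a p)) <= B * Rsum l (fun p => / INR p ^ 2).
Proof.
move=> pr_l; rewrite -Rsum_scal; apply: Rsum_le => p p_in.
by have := a_small p (proj1 (Forall_forall _ l) pr_l p p_in); rewrite /Rdiv Rmult_comm.
Qed.

Lemma euler_partial_abs (N : nat) : Rabs (euler_partial N) <= exp (2 * B).
Proof.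
have := Rprod_deviation (primes_upto N) a; have := Rprod_1abs_le_exp (primes_upto N) a.
have := sum_abs_terms_le _ (prime_list_primes_upto N); have := recip_sq_sum_primes N.
move=> sq_le sum_le prod_le dev_le.
have := exp_le_mono (Rsum (primes_upto N) (fun p => Rabs (a p))) (2 * B) ltac:(nra).
have := Rabs_triang (euler_partial N - 1) 1.
by rewrite Rabs_R1 (_ : euler_partial N - 1 + 1 = euler_partial N); [rewrite /euler_partial; lra | ring].
Qed.

Lemma euler_tail_dev (N M : nat) : (1 <= N)%coq_nat ->
  Rabs (Rprod (primes_between N M) (fun p => 1 + a p) - 1) <= exp (B / INR N) - 1.
Proof.
move=> N_ge1; set l := primes_between N M.
apply: Rle_trans (Rprod_deviation l a) _.
have sq_le : Rsum l (fun p => / INR p ^ 2) <= / INR N := recip_sq_sum_between N M N_ge1.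
have := Rprod_1abs_le_exp l a; have := sum_abs_terms_le l (prime_list_primes_between N M).
move=> sum_le prod_le.
have := exp_le_mono (Rsum l (fun p => Rabs (a p))) (B / INR N) ltac:(rewrite /Rdiv; nra).
lra.
Qed.

Lemma euler_partial_split (N M : nat) : (N <= M)%coq_nat ->
  euler_partial M = euler_partial N * Rprod (primes_between N M) (fun p => 1 + a p).
Proof. by move=> N_le_M; rewrite /euler_partial (primes_upto_split N M) // Rprod_app. Qed.

Lemma exp_sub1_le (t : R) : 0 <= t -> exp t - 1 <= t * exp t.
Proof.
move=> t_ge0; have := exp_ineq1_le (- t); have := exp_pos t.
have : exp (- t) * exp t = 1 by rewrite -exp_plus (_ : - t + t = 0) ?exp_0; [|ring].
nra.
Qed.

Definition euler_rate : R := exp (3 * B) * B.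

Lemma euler_rate_ge0 : 0 <= euler_rate.
Proof. by have := exp_pos (3 * B); rewrite /euler_rate; nra. Qed.

Lemma euler_cauchy_bound (N M : nat) : (1 <= N)%coq_nat -> (N <= M)%coq_nat ->
  Rabs (euler_partial M - euler_partial N) <= euler_rate / INR N.
Proof.
move=> N_ge1 N_le_M; rewrite (euler_partial_split N M N_le_M).
have := euler_tail_dev N M N_ge1; set T := Rprod _ _ => tail_dev.
rewrite (_ : euler_partial N * T - euler_partial N = euler_partial N * (T - 1)); last ring.
rewrite Rabs_mult.
have N_ge1' := INR_ge1 N N_ge1.
have inv_le1 : / INR N <= 1 by rewrite -Rinv_1; apply: Rinv_le_contravar; lra.
have t_ge0 : 0 <= B / INR N by apply: Rle_mult_inv_pos; lra.
have t_le : B / INR N <= B by rewrite /Rdiv; nra.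
have T_dev : Rabs (T - 1) <= B / INR N * exp B.
  have := exp_sub1_le _ t_ge0.
  have := exp_le_mono _ _ t_le; have := exp_pos (B / INR N); nra.
have := Rmult_le_compat _ _ _ _ (Rabs_pos _) (Rabs_pos _) (euler_partial_abs N) T_dev.
rewrite /euler_rate (_ : exp (3 * B) = exp (2 * B) * exp B); last by rewrite -exp_plus; congr exp; ring.
by rewrite /Rdiv; nra.
Qed.

Lemma euler_cauchy : Cauchy_crit euler_partial.
Proof.
move=> eps eps_pos; have rate_ge0 := euler_rate_ge0.
have [N0 [N0_lt N0_pos]] := archimed_cor1 (eps / (euler_rate + 1)) ltac:(apply: Rdiv_lt_0_compat; lra).
have N0_ge1 := INR_ge1 N0 ltac:(lia).
have close n m : (N0 <= n)%coq_nat -> (n <= m)%coq_nat -> Rabs (euler_partial m - euler_partial n) < eps.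
  move=> N0_le_n n_le_m; apply: Rle_lt_trans (euler_cauchy_bound n m ltac:(lia) n_le_m) _.
  have : / INR n <= / INR N0 by apply: Rinv_le_contravar; [lra | apply: le_INR].
  have : eps / (euler_rate + 1) * (euler_rate + 1) = eps by field; lra.
  have : 0 < / INR N0 by apply: Rinv_0_lt_compat; lra.
  by rewrite /Rdiv in N0_lt *; nra.
exists N0 => n m n_ge m_ge; rewrite /R_dist.
case: (Nat.le_ge_cases n m) => [n_le_m|m_le_n]; last exact: close.
by rewrite Rabs_minus_sym; apply: close.
Qed.

Lemma euler_partial_lower : exists N1, 0 < euler_partial N1 /\
  forall M, (N1 <= M)%coq_nat -> 5 / 8 * euler_partial N1 <= euler_partial M.
Proof.
have [N1 [N1_lt N1_pos]] := archimed_cor1 (/ (8 * B + 1)) ltac:(apply: Rinv_0_lt_compat; lra).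
have N1_ge1 := INR_ge1 N1 ltac:(lia).
have t_small : B / INR N1 <= / 8.
  have : / INR N1 * (8 * B + 1) < / (8 * B + 1) * (8 * B + 1) by apply: Rmult_lt_compat_r; lra.
  rewrite Rinv_l; last lra.
  have : 0 < / INR N1 by apply: Rinv_0_lt_compat; lra.
  by rewrite /Rdiv; nra.
have partial_pos : 0 < euler_partial N1.
  by apply: Rprod_pos => p /In_primes_upto [pr_p _]; apply: factor_pos.
exists N1; split => // M N1_le_M; rewrite (euler_partial_split N1 M N1_le_M).
have := euler_tail_dev N1 M ltac:(lia); set T := Rprod _ _ => T_dev.
have t_ge0 : 0 <= B / INR N1 by apply: Rle_mult_inv_pos; lra.
have exp_sub := exp_sub1_le _ t_ge0.
have exp_le3 : exp (B / INR N1) <= 3.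
  by apply: Rle_trans (exp_le_mono (B / INR N1) 1 ltac:(lra)) exp_le_3.
have T_ge : 5 / 8 <= T.
  by have := Rle_abs (- (T - 1)); rewrite Rabs_Ropp; nra.
by rewrite Rmult_comm; apply: Rmult_le_compat_l; lra.
Qed.

Lemma euler_product_conv : exists S, Un_cv euler_partial S /\ 0 < S /\
  forall N, (1 <= N)%coq_nat -> Rabs (euler_partial N - S) <= euler_rate / INR N.
Proof.
have [S S_lim] := R_complete euler_partial euler_cauchy.
exists S; split => //; split.
  have [N1 [N1_pos N1_lower]] := euler_partial_lower.
  by apply: Rlt_le_trans (Un_cv_lower _ _ _ N1 S_lim N1_lower); lra.
move=> N N_ge1; rewrite Rabs_minus_sym.
apply: (Un_cv_dist_le _ _ _ _ N S_lim) => M N_le_M.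
exact: euler_cauchy_bound.
Qed.

End EulerProduct.

Section MeanValue.
Variable e : list Z.
Hypothesis weight0 : weight e = 0%Z.

Let terms (N : nat) : list (nat * R) := sqfree_terms (local_dev e) (primes_upto N).

Lemma jtq_expand (N n : nat) : (1 <= n)%coq_nat -> (n <= N)%coq_nat ->
  jtq e n = Rsum (terms N) (fun dw => if Nat.eqb (Nat.modulo n (fst dw)) 0 then snd dw else 0).
Proof.
move=> n_ge1 n_le_N; rewrite jtq_local // (prime_divisors_filter n N) // Rprod_filter.
rewrite -sqfree_expand; [|exact: prime_list_primes_upto | exact: NoDup_primes_upto].
by apply: Rprod_ext => p _; rewrite /local_dev; case: (Nat.eqb _ _); ring.
Qed.

Lemma jtq_sum_expand (N : nat) :
  jtq_sum e N = Rsum (terms N) (fun dw => snd dw * INR (count_multiples (fst dw) N)).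
Proof.
rewrite (_ : jtq_sum e N = Rsum (seq 1 N) (jtq e)) //.
rewrite (Rsum_ext _ _ (fun n => Rsum (terms N)
           (fun dw => if Nat.eqb (Nat.modulo n (fst dw)) 0 then snd dw else 0))).
  by rewrite Rsum_swap; apply: Rsum_ext => dw _; apply: Rsum_multiples.
by move=> n /in_seq n_range; apply: jtq_expand; lia.
Qed.

Lemma sing_partial_expand (N : nat) :
  sing_partial e N = Rsum (terms N) (fun dw => snd dw / INR (fst dw)).
Proof.
rewrite /sing_partial sqfree_div; last exact: prime_list_primes_upto.
by apply: Rprod_ext => p /In_primes_upto [pr_p _]; apply: sing_factor_local.
Qed.

(* Replacing floor(N/d) by N/d costs at most sum_d |g(d)| = prod_p (1 + |g(p)|). *)
Lemma jtq_sum_partial_error (N : nat) :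
  Rabs (jtq_sum e N - INR N * sing_partial e N) <=
  Rprod (primes_upto N) (fun p => 1 + Rabs (local_dev e p)).
Proof.
rewrite jtq_sum_expand sing_partial_expand -sqfree_abs.
set c := fun dw : nat * R => INR (count_multiples (fst dw) N).
have -> : Rsum (terms N) (fun dw => snd dw * c dw) -
          INR N * Rsum (terms N) (fun dw => snd dw / INR (fst dw)) =
          Rsum (terms N) (fun dw => snd dw * c dw + -1 * (INR N * (snd dw / INR (fst dw)))).
  by rewrite Rsum_plus !Rsum_scal; ring.
apply: Rle_trans (Rsum_abs _ _) _; apply: Rsum_le => dw dw_in.
have d_ge1 := sqfree_terms_ge1 _ _ (prime_list_primes_upto N) dw dw_in.
have := count_multiples_real (fst dw) N d_ge1.
have d_pos : 0 < INR (fst dw) by apply: lt_0_INR; lia.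
move=> count_bounds.
rewrite /c (_ : snd dw * INR (count_multiples (fst dw) N) + -1 * (INR N * (snd dw / INR (fst dw))) =
             snd dw * (INR (count_multiples (fst dw) N) - INR N / INR (fst dw))); last by field; lra.
rewrite Rabs_mult.
have : Rabs (INR (count_multiples (fst dw) N) - INR N / INR (fst dw)) <= 1 by apply: Rabs_le; lra.
by have := Rabs_pos (snd dw); nra.
Qed.

(* prod_{p <= N} (1 + |g(p)|) << (ln N)^{|e_1|}, by Mertens' bound. *)
Lemma local_abs_prod_bound : exists C, 0 < C /\ forall N, (2 <= N)%coq_nat ->
  Rprod (primes_upto N) (fun p => 1 + Rabs (local_dev e p)) <= C * ln (INR N) ^ Z.abs_nat (ecoef e 1).
Proof.
have [D [D_ge0 dev_le]] := local_dev_bound e; have [K recip_le] := recip_sum_bound.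
set k := Z.abs_nat (ecoef e 1) in dev_le *; have k_ge0 := pos_INR k.
exists (exp (INR k * K + 2 * D)); split => [|N N_ge2]; first exact: exp_pos.
apply: Rle_trans (Rprod_le _ _ (fun p => exp (INR k / INR p + D / INR p ^ 2)) _) _.
  move=> p /In_primes_upto [pr_p _]; have := dev_le p (isprimeb_ge2 p pr_p).
  have := Rabs_pos (local_dev e p); have := exp_ineq1_le (INR k / INR p + D / INR p ^ 2); lra.
rewrite Rprod_exp Rsum_plus /Rdiv !Rsum_scal -/(recip_sum N).
have := recip_sq_sum_primes N; have := recip_le N N_ge2.
have ln_pos : 0 < ln (INR N) by apply: ln_gt0; have := INR_ge2 N N_ge2; lra.
rewrite -Rpower_pow // /Rpower -exp_plus => ? ?; apply: exp_le_mono; nra.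
Qed.

Lemma local_term_small : exists B, 0 <= B /\ forall p, isprimeb p = true ->
  Rabs (local_dev e p / INR p) <= B / INR p ^ 2.
Proof.
have [D [D_ge0 dev_le]] := local_dev_bound e.
set k := INR (Z.abs_nat (ecoef e 1)) in dev_le *; have k_ge0 : 0 <= k := pos_INR _.
exists (k + D); split => [|p pr_p]; first lra.
have p_ge2 := INR_ge2 p (isprimeb_ge2 p pr_p); have := dev_le p (isprimeb_ge2 p pr_p).
have inv_pos : 0 < / INR p by apply: Rinv_0_lt_compat; lra.
have inv_le : / INR p <= 1 by rewrite -Rinv_1; apply: Rinv_le_contravar; lra.
rewrite /Rdiv Rabs_mult Rabs_inv (Rabs_right (INR p)) ?pow_inv /=; last lra.
rewrite !Rmult_1_r Rinv_mult; set t := / INR p in inv_pos inv_le * => dev_le_p.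
have := Rmult_le_compat_r _ _ _ (Rlt_le _ _ inv_pos) dev_le_p.
have : D * (t * t) * t <= D * (t * t).
  by rewrite -[X in _ <= X]Rmult_1_r; apply: Rmult_le_compat_l; nra.
nra.
Qed.

Lemma local_term_pos (p : nat) : isprimeb p = true -> 0 < 1 + local_dev e p / INR p.
Proof.
move=> pr_p; have p_ge2 := isprimeb_ge2 p pr_p; have := local_factor_pos e p p_ge2.
have := INR_ge2 p p_ge2; rewrite /local_dev => ? ?.
rewrite (_ : 1 + (local_factor e p - 1) / INR p = (local_factor e p + (INR p - 1)) / INR p);
  last by field; lra.
by apply: Rdiv_lt_0_compat; lra.
Qed.

Lemma sing_partial_conv : exists S, Un_cv (sing_partial e) S /\ 0 < S /\
  exists K, 0 <= K /\ forall N, (1 <= N)%coq_nat -> Rabs (sing_partial e N - S) <= K / INR N.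
Proof.
have [B [B_ge0 term_small]] := local_term_small.
set a := fun p => local_dev e p / INR p.
have partial_eq N : sing_partial e N = euler_partial a N.
  by apply: Rprod_ext => p /In_primes_upto [pr_p _]; apply: sing_factor_local.
have [S [S_lim [S_pos S_rate]]] := euler_product_conv a B B_ge0 term_small local_term_pos.
exists S; split; [| split => //].
  move=> eps eps_pos; have [N0 N0_spec] := S_lim eps eps_pos.
  by exists N0 => n n_ge; rewrite partial_eq; apply: N0_spec.
exists (euler_rate B); split => [|N N_ge1]; first exact: euler_rate_ge0.
by rewrite partial_eq; apply: S_rate.
Qed.

End MeanValue.

(* Passing from N S_N to S x with N <= x < N + 1 costs O(1). *)
Lemma smoothing_error (sN S K n x : R) : 1 <= n -> 0 < S -> n <= x < n + 1 ->
  Rabs (sN - S) <= K / n -> Rabs (n * sN - S * x) <= K + S.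
Proof.
move=> n_ge1 S_pos x_range sN_close.
rewrite (_ : n * sN - S * x = n * (sN - S) + S * (n - x)); last ring.
apply: Rle_trans (Rabs_triang _ _) _.
rewrite !Rabs_mult (Rabs_right n) ?(Rabs_right S); try lra.
have : n * Rabs (sN - S) <= K.
  rewrite (_ : K = n * (K / n)); last by field; lra.
  by apply: Rmult_le_compat_l; lra.
have : Rabs (n - x) <= 1 by apply: Rabs_le; lra.
nra.
Qed.

Lemma const_le_log_pow (c x : R) (k : nat) : 0 <= c -> 2 <= x -> c <= c / ln 2 ^ k * ln x ^ k.
Proof.
move=> c_ge0 x_ge2; have ln2_pos : 0 < ln 2 by apply: ln_gt0; lra.
have pow_pos := pow_lt _ k ln2_pos.
have : ln 2 ^ k <= ln x ^ k by apply: pow_incr; split; [lra | apply: ln_le_mono; lra].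
rewrite /Rdiv (_ : c / ln 2 ^ k * ln x ^ k = c * (ln x ^ k / ln 2 ^ k)) ?Rmult_assoc; last by field; lra.
move=> pow_le; rewrite -[X in X <= _]Rmult_1_r; apply: Rmult_le_compat_l => //.
by rewrite -(Rinv_r (ln 2 ^ k)); [apply: Rmult_le_compat_r; [apply/Rlt_le/Rinv_0_lt_compat|] | lra].
Qed.

Theorem theorem2 (e : list Z) :
  weight e = 0%Z ->
  exists S : R,
    Un_cv (sing_partial e) S /\ 0 < S /\
    exists C : R, forall (x : R) (N : nat),
      2 <= x -> INR N <= x < INR N + 1 ->
      Rabs (jtq_sum e N - S * x) <= C * (ln x) ^ (Z.abs_nat (ecoef e 1)).
Proof.
move=> weight0; set k := Z.abs_nat (ecoef e 1).
have [S [S_lim [S_pos [K [K_ge0 S_rate]]]]] := sing_partial_conv e weight0.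
have [C [C_pos prod_le]] := local_abs_prod_bound e.
exists S; split => //; split => //.
exists (C + (K + S) / ln 2 ^ k) => x N x_ge2 [N_le_x x_lt].
have N_ge2 : (2 <= N)%coq_nat by have : (1 < N)%coq_nat by apply: INR_lt; rewrite /=; lra.
have N_ge1 := INR_ge1 N ltac:(lia).
have lnN_le : ln (INR N) ^ k <= ln x ^ k.
  by apply: pow_incr; split; [apply: ln_ge0 | apply: ln_le_mono]; lra.
have main_err := Rle_trans _ _ _ (jtq_sum_partial_error e weight0 N) (prod_le N N_ge2).
have smooth_err := smoothing_error _ _ _ _ _ N_ge1 S_pos (conj N_le_x x_lt) (S_rate N ltac:(lia)).
have := const_le_log_pow (K + S) x k ltac:(lra) x_ge2.
have := Rmult_le_compat_l _ _ _ (Rlt_le _ _ C_pos) lnN_le.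
have := Rabs_triang (jtq_sum e N - INR N * sing_partial e N) (INR N * sing_partial e N - S * x).
rewrite (_ : jtq_sum e N - INR N * sing_partial e N + (INR N * sing_partial e N - S * x) =
             jtq_sum e N - S * x); last ring.
rewrite -/k in main_err; rewrite Rmult_plus_distr_r; lra.
Qed.
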